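(* Let $(\mathcal{A},v)$ be a valued abelian group and $A_1,\dots,A_n$ subgroups of $\mathcal{A}$ such that each $(A_i,v|_{A_i})$ is spherically complete. If the sum $A_1+\dots+A_n\subseteq\mathcal{A}$ is pseudo-direct, then $(A_1+\dots+A_n, v)$ is spherically complete.
   Context: A valued abelian group $(A,v)$ is an abelian group $A$ with a map $v:A\to \Gamma\cup\{\infty\}$, $a\mapsto va$, onto a totally ordered set with largest element $\infty$, such that $va=\infty\iff a=0$ and $v(a-a')\ge\min\{va,va'\}$ for all $a,a'\in A$. For $a\in A$ and $\alpha\in v(A)$ the ball is $B_\alpha(a)=\{a'\in A\mid v(a-a')\ge\alpha\}$. A nest of balls is a set of balls totally ordered by inclusion; $(A,v)$ is spherically complete if every nest of balls has nonempty intersection. The sum $A_1+\dots+A_n$ of subgroups of $(\mathcal{A},v)$ is pseudo-direct if for every nonzero $a\in A_1+\dots+A_n$ there are $a_i\in A_i$ ($1\le i\le n$) with $v\sum_{i=1}^n a_i=\min_{1\le i\le n}va_i$ and $v\big(a-\sum_{i=1}^n a_i\big)>va$. *)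

From HB Require Import structures.
From mathcomp Require Import all_boot all_order all_algebra.
Set Implicit Arguments. Unset Strict Implicit. Unset Printing Implicit Defensive.
Import Order.TTheory GRing.Theory.
Local Open Scope ring_scope.

Section ValuedGroup.
Variables (d : Order.disp_t) (G : orderType d) (infty : G) (A : zmodType) (v : A -> G).

(* (A, v) is a valued abelian group: v maps A onto the totally ordered set G,
   whose largest element infty plays the role of the symbol \infty
   (so G = Gamma \cup {infty}). *)
Definition valued_group : Prop :=
  [/\ (forall g : G, (g <= infty)%O),
      (forall g : G, exists a : A, v a = g),
      (forall a : A, v a = infty <-> a = 0) &
      (forall a a' : A, (Order.min (v a) (v a') <= v (a - a'))%O)].

Definition subgroup (S : A -> Prop) : Prop :=
  S 0 /\ (forall a b, S a -> S b -> S (a - b)).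

Definition ball (S : A -> Prop) (alpha : G) (a : A) : A -> Prop :=
  fun a' => S a' /\ (alpha <= v (a - a'))%O.

Definition is_ball (S : A -> Prop) (B : A -> Prop) : Prop :=
  exists alpha a, S a /\ (exists s, S s /\ v s = alpha) /\
    (forall x, B x <-> ball S alpha a x).

Definition nest (S : A -> Prop) (N : (A -> Prop) -> Prop) : Prop :=
  (forall B, N B -> is_ball S B) /\
  (forall B1 B2, N B1 -> N B2 ->
     (forall x, B1 x -> B2 x) \/ (forall x, B2 x -> B1 x)).

Definition spherically_complete (S : A -> Prop) : Prop :=
  forall N, nest S N -> exists x, S x /\ forall B, N B -> B x.

Definition sum_subgroups n (Ai : 'I_n -> A -> Prop) : A -> Prop :=
  fun a => exists f : 'I_n -> A, (forall i, Ai i (f i)) /\ a = \sum_(i < n) f i.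

Definition pseudo_direct n (Ai : 'I_n -> A -> Prop) : Prop :=
  forall a, sum_subgroups Ai a -> a != 0 ->
    exists f : 'I_n -> A, (forall i, Ai i (f i)) /\
      v (\sum_(i < n) f i) = \big[Order.min/infty]_(i < n) v (f i) /\
      (v a < v (a - \sum_(i < n) f i))%O.

End ValuedGroup.

(* Suppose a nest N of balls of S := A_1 + ... + A_n has empty intersection.
   Every x in S then lies outside some ball B_alpha(c) of N, and the value
   dist(x) := v(c - x) does not depend on that ball; it measures how close x
   comes to the intersection.  Order the families (g_i) of summands g_i in A_i
   by "h refines g" when v(g_i - h_i) >= dist(sum g) for all i.  A chain of
   families defines, in each A_i, a nest of balls with arbitrary radii; by
   spherical completeness of A_i these have a common point, so every chain has
   an upper bound, and Zorn's lemma gives a family g that every refinement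
   refines back.  But pseudo-directness applied to c - sum g, where B_alpha(c)
   avoids sum g, produces f with v(f_i) >= v(sum f) = v(c - sum g) = dist(sum g)
   and dist(sum g) < dist(sum (g + f)), so g + f refines g and not conversely. *)
From mathcomp Require Import all_boot all_order all_algebra.
From mathcomp Require Import boolp classical_sets.
Set Implicit Arguments. Unset Strict Implicit. Unset Printing Implicit Defensive.
Import Order.TTheory GRing.Theory.
Local Open Scope ring_scope.
Local Open Scope order_scope.
Local Open Scope classical_set_scope.

Section Subgroups.
Variables (A : zmodType) (S : A -> Prop).
Hypothesis S_sub : subgroup S.

Lemma subgroupN a : S a -> S (- a).
Proof. by move=> Sa; rewrite -sub0r; apply: S_sub.2 => //; exact: S_sub.1. Qed.

Lemma subgroupD a b : S a -> S b -> S (a + b).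
Proof. by move=> Sa Sb; rewrite -(opprK b); apply: S_sub.2 => //; exact: subgroupN. Qed.

End Subgroups.

Section Valuation.
Variables (d : Order.disp_t) (G : orderType d) (infty : G) (A : zmodType) (v : A -> G).
Hypothesis vA : valued_group infty v.

Lemma le_infty g : g <= infty.
Proof. by case: vA. Qed.

Lemma val0 : v 0 = infty.
Proof. by case: vA => _ _ v_infty _; apply/v_infty. Qed.

Lemma valB_ge g a b : g <= v a -> g <= v b -> g <= v (a - b).
Proof.
by case: vA => _ _ _ vB ga gb; apply: le_trans (vB a b); rewrite le_min ga gb.
Qed.

Lemma valN a : v (- a) = v a.
Proof.
have le_vN b : v b <= v (- b).
  by rewrite -sub0r; apply: valB_ge; rewrite // val0 le_infty.
by apply/eqP; rewrite eq_le le_vN -{2}(opprK a) le_vN.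
Qed.

Lemma valD_ge g a b : g <= v a -> g <= v b -> g <= v (a + b).
Proof. by move=> ga gb; rewrite -(opprK b); apply: valB_ge; rewrite // valN. Qed.

Lemma valBC a b : v (a - b) = v (b - a).
Proof. by rewrite -valN opprB. Qed.

Lemma val_sum_ge g n (F : 'I_n -> A) :
  (forall i, g <= v (F i)) -> g <= v (\sum_(i < n) F i).
Proof.
move=> gF; elim/big_ind: _ => [|a b|i _]; last exact: gF.
- by rewrite val0 le_infty.
- exact: valD_ge.
Qed.

Lemma val_eq_of_ltB a b : v a < v (a - b) -> v b = v a.
Proof.
move=> lt_a_ab; have le_a_b : v a <= v b.
  by rewrite -[b](subKr a); apply: valB_ge => //; exact: ltW.
apply/eqP; rewrite eq_le le_a_b andbT leNgt; apply/negP => lt_a_b.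
have : Order.min (v b) (v (a - b)) <= v a.
  rewrite -[X in _ <= v X](subrK b a) addrC.
  by apply: valD_ge; rewrite ge_min lexx ?orbT.
by rewrite leNgt lt_min lt_a_b lt_a_ab.
Qed.

Section Balls.
Variable S : A -> Prop.

Lemma ball_center al a : S a -> ball v S al a a.
Proof. by move=> Sa; split; rewrite // subrr val0 le_infty. Qed.

Lemma ball_le_val al a x y : ball v S al a x -> ball v S al a y -> al <= v (x - y).
Proof.
move=> [_ ax] [_ ay]; have -> : x - y = (x - a) - (y - a).
  by rewrite opprB addrA subrK.
by apply: valB_ge; rewrite valBC.
Qed.

Lemma ball_sub al be a b y :
  ball v S al a y -> ball v S be b y -> al <= be -> ball v S be b `<=` ball v S al a.
Proof.
move=> [_ ay] by_ al_be z bz; split; first by case: bz.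
have -> : a - z = (a - y) + (y - z) by rewrite addrA subrK.
apply: valD_ge => //.
exact: le_trans al_be (ball_le_val by_ bz).
Qed.

Lemma ball_meet_nested al be a b y :
  ball v S al a y -> ball v S be b y ->
  ball v S al a `<=` ball v S be b \/ ball v S be b `<=` ball v S al a.
Proof.
move=> ay by_; case: (leP al be) => [al_be|/ltW be_al].
  by right; exact: ball_sub ay by_ al_be.
by left; exact: ball_sub by_ ay be_al.
Qed.

Lemma ball_notin_lt al a x : S x -> ~ ball v S al a x -> v (a - x) < al.
Proof. by move=> Sx nax; rewrite ltNge; apply/negP => ax; apply: nax. Qed.

Lemma is_ballE B : is_ball v S B -> exists al c, S c /\ B = ball v S al c.
Proof.
move=> [al [c [Sc [_ Bc]]]]; exists al, c; split=> //.
by apply/funext => x; apply/propext.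
Qed.

(* Unlike al and be, the middle radius v (b - x) lies in v(S). *)
Lemma ball_between al be a b x :
  S b -> ball v S be b `<=` ball v S al a -> ball v S al a x -> ~ ball v S be b x ->
  ball v S be b `<=` ball v S (v (b - x)) b /\
  ball v S (v (b - x)) b `<=` ball v S al a.
Proof.
move=> Sb ba ax nbx; have Sx : S x by case: ax.
split=> [y [Sy by_]|].
  by split=> //; apply/ltW/(lt_le_trans (ball_notin_lt Sx nbx)).
apply: (ball_sub (ba _ (ball_center be Sb))); first exact: ball_center.
exact: ball_le_val (ba _ (ball_center be Sb)) ax.
Qed.

Lemma val_eq_outside_nested al be a b x :
  S a -> ball v S al a `<=` ball v S be b -> ~ ball v S be b x -> S x ->
  v (a - x) = v (b - x).
Proof.
move=> Sa ab nbx Sx; apply: val_eq_of_ltB.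
have -> : (b - x) - (a - x) = b - a by rewrite opprB addrA subrK.
have [_ be_ba] := ab _ (ball_center al Sa).
exact: lt_le_trans (ball_notin_lt Sx nbx) be_ba.
Qed.

Hypotheses (S_sub : subgroup S) (S_sc : spherically_complete v S).

(* Spherical completeness for nests of balls whose radii need not lie in v(S). *)
Lemma spherically_complete_chain (I : Type) (M : set I) (rad : I -> G) (cen : I -> A) :
  (forall j, M j -> S (cen j)) ->
  (forall j k, M j -> M k ->
     ball v S (rad j) (cen j) `<=` ball v S (rad k) (cen k) \/
     ball v S (rad k) (cen k) `<=` ball v S (rad j) (cen j)) ->
  exists2 z, S z & forall j, M j -> rad j <= v (cen j - z).
Proof.
move=> Scen Mnest; pose B j := ball v S (rad j) (cen j).
have cenB j : M j -> B j (cen j) by move=> Mj; exact/ball_center/Scen.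
have [[j0 Mj0 j0min]|nomin] :=
  pselect (exists2 j0, M j0 & forall k, M k -> B j0 `<=` B k).
  exists (cen j0); first exact: Scen.
  by move=> j Mj; have [] := j0min j Mj _ (cenB _ Mj0).
pose N' C := exists j k x, [/\ M j, M k, B k `<=` B j, B j x & ~ B k x] /\
                             C = ball v S (v (cen k - x)) (cen k).
have N'nest : nest v S N'.
  split=> [C [j [k [x [[Mj Mk kj jx nkx] ->]]]]|C1 C2].
    exists (v (cen k - x)), (cen k); split; first exact: Scen.
    split=> //; exists (cen k - x); split=> //.
    by apply: S_sub.2; [exact: Scen | case: jx].
  move=> [j1 [k1 [x1 [[Mj1 Mk1 kj1 jx1 nkx1] ->]]]].
  move=> [j2 [k2 [x2 [[Mj2 Mk2 kj2 jx2 nkx2] ->]]]].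
  have [sub1 _] := ball_between (Scen _ Mk1) kj1 jx1 nkx1.
  have [sub2 _] := ball_between (Scen _ Mk2) kj2 jx2 nkx2.
  have [k12|k21] := Mnest _ _ Mk1 Mk2.
  - apply: (@ball_meet_nested _ _ _ _ (cen k1)); first exact/sub1/cenB.
    exact/sub2/k12/cenB.
  - apply: (@ball_meet_nested _ _ _ _ (cen k2)); last exact/sub2/cenB.
    exact/sub1/k21/cenB.
have [z [Sz zN']] := S_sc N'nest.
exists z => // j Mj.
have [k Mk njk] : exists2 k, M k & ~ (B j `<=` B k).
  by apply/existsPNP => jmin; apply: nomin; exists j.
have kj : B k `<=` B j by case: (Mnest _ _ Mj Mk).
have [x jx nkx] : exists2 x, B j x & ~ B k x by apply/existsPNP.
have [_ mid] := ball_between (Scen _ Mk) kj jx nkx.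
have zk : ball v S (v (cen k - x)) (cen k) z by apply: zN'; exists j, k, x.
by case: (mid z zk).
Qed.

End Balls.
End Valuation.

Section SumOfSubgroups.
Variables (d : Order.disp_t) (G : orderType d) (infty : G) (A : zmodType) (v : A -> G)
  (n : nat) (Ai : 'I_n -> A -> Prop).
Hypotheses (vA : valued_group infty v) (Ai_sub : forall i, subgroup (Ai i))
  (Ai_sc : forall i, spherically_complete v (Ai i)) (Ai_pd : pseudo_direct infty v Ai).

Local Notation S := (sum_subgroups Ai).
Local Notation sigma g := (\sum_(i < n) g i).

Definition summands (g : 'I_n -> A) := forall i, Ai i (g i).

Lemma summands_sum g : summands g -> S (sigma g).
Proof. by exists g. Qed.

Lemma sum_subgroupsB a b : S a -> S b -> S (a - b).
Proof.
move=> [f [Pf ->]] [g [Pg ->]]; exists (fun i => f i - g i); split; last first.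
  by rewrite sumrB.
by move=> i; apply: (Ai_sub i).2.
Qed.

Section AvoidingNest.
Variable N : set (set A).
Hypotheses (N_nest : nest v S N) (N_avoids : forall x, S x -> exists2 B, N B & ~ B x).

Lemma nest_ballE B : N B -> exists al c, S c /\ B = ball v S al c.
Proof. by move=> NB; apply: is_ballE; exact: N_nest.1. Qed.

(* v(c - x) for any ball B_al(c) of N avoiding x; it does not depend on the
   ball (dist_to_nestE), and infty is only a junk value for x outside S. *)
Definition dist_to_nest (x : A) : G :=
  xget infty [set g | exists al c,
    [/\ N (ball v S al c), S c, ~ ball v S al c x & g = v (c - x)]].

Lemma dist_to_nest_witness x : S x -> exists al c,
  [/\ N (ball v S al c), S c, ~ ball v S al c x & dist_to_nest x = v (c - x)].
Proof.
move=> Sx; rewrite /dist_to_nest; case: xgetP => [g _ Pg|noP]; first exact: Pg.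
have [B NB nBx] := N_avoids Sx; have [al [c [Sc eB]]] := nest_ballE NB.
by subst B; case: (noP (v (c - x))); exists al, c.
Qed.

Lemma dist_to_nestE al c x : N (ball v S al c) -> S c -> ~ ball v S al c x -> S x ->
  dist_to_nest x = v (c - x).
Proof.
move=> NB Sc nBx Sx; have [al' [c' [NB' Sc' nB'x ->]]] := dist_to_nest_witness Sx.
case: (N_nest.2 _ _ NB NB') => sub.
  by rewrite (val_eq_outside_nested vA Sc sub nB'x Sx).
by rewrite (val_eq_outside_nested vA Sc' sub nBx Sx).
Qed.

Lemma le_dist_to_nest al c y : N (ball v S al c) -> S c -> ball v S al c y ->
  al <= dist_to_nest y.
Proof.
move=> NB Sc By; have Sy : S y by case: By.
have [al' [c' [NB' Sc' nB'y ->]]] := dist_to_nest_witness Sy.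
have B'B : ball v S al' c' `<=` ball v S al c.
  by case: (N_nest.2 _ _ NB NB') => // BB'; exfalso; exact/nB'y/BB'.
exact: (ball_le_val vA (B'B _ (ball_center vA al' Sc')) By).
Qed.

Lemma dist_to_nest_le x y : S x -> S y -> dist_to_nest x <= v (x - y) ->
  dist_to_nest x <= dist_to_nest y.
Proof.
move=> Sx Sy dxy; have [al [c [NB Sc nBx dx]]] := dist_to_nest_witness Sx.
have [By|nBy] := pselect (ball v S al c y).
  apply/ltW/(lt_le_trans _ (le_dist_to_nest NB Sc By)).
  by rewrite dx; exact: (ball_notin_lt Sx nBx).
rewrite (dist_to_nestE NB Sc nBy Sy).
have -> : c - y = (c - x) + (x - y) by rewrite addrA subrK.
by apply: (valD_ge vA _ dxy); rewrite dx.
Qed.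

Lemma dist_to_nest_lt al c x y :
  N (ball v S al c) -> S c -> ~ ball v S al c x -> S x -> S y ->
  v (c - x) < v (c - y) -> dist_to_nest x < dist_to_nest y.
Proof.
move=> NB Sc nBx Sx Sy lt_xy; rewrite (dist_to_nestE NB Sc nBx Sx).
have [By|nBy] := pselect (ball v S al c y).
  exact: lt_le_trans (ball_notin_lt Sx nBx) (le_dist_to_nest NB Sc By).
by rewrite (dist_to_nestE NB Sc nBy Sy).
Qed.

Definition refines (g h : 'I_n -> A) :=
  forall i, dist_to_nest (sigma g) <= v (g i - h i).

Lemma refines_refl g : refines g g.
Proof. by move=> i; rewrite subrr (val0 vA) (le_infty vA). Qed.

Lemma refines_dist g h : summands g -> summands h -> refines g h ->
  dist_to_nest (sigma g) <= dist_to_nest (sigma h).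
Proof.
move=> Pg Ph gh; apply: dist_to_nest_le; try exact: summands_sum.
by rewrite -sumrB; apply: (val_sum_ge vA).
Qed.

Lemma refines_trans g h k : summands g -> summands h ->
  refines g h -> refines h k -> refines g k.
Proof.
move=> Pg Ph gh hk i.
have -> : g i - k i = (g i - h i) + (h i - k i) by rewrite addrA subrK.
apply: (valD_ge vA) => //; exact: le_trans (refines_dist Pg Ph gh) (hk i).
Qed.

Lemma refines_ball g h i : summands g -> summands h -> refines g h ->
  ball v (Ai i) (dist_to_nest (sigma h)) (h i) `<=`
  ball v (Ai i) (dist_to_nest (sigma g)) (g i).
Proof.
move=> Pg Ph gh; apply: (ball_sub vA (y := h i)); first by split; [exact: Ph|].
  exact: (ball_center vA _ (Ph i)).
exact: refines_dist.
Qed.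

Lemma refines_chain_ub (I : Type) (M : set I) (gs : I -> 'I_n -> A) :
  (forall j, M j -> summands (gs j)) ->
  (forall j k, M j -> M k -> refines (gs j) (gs k) \/ refines (gs k) (gs j)) ->
  exists2 h, summands h & forall j, M j -> refines (gs j) h.
Proof.
move=> Mg Mchain.
have ub i : exists z, Ai i z /\
    forall j, M j -> dist_to_nest (sigma (gs j)) <= v (gs j i - z).
  have [|j k Mj Mk|z Az zub] := spherically_complete_chain vA (Ai_sub i) (@Ai_sc i)
    (M := M) (rad := fun j => dist_to_nest (sigma (gs j))) (cen := fun j => gs j i).
  - by move=> j Mj; exact: Mg.
  - by case: (Mchain _ _ Mj Mk) => jk; [right|left]; apply: refines_ball => //;
      exact: Mg.
  - by exists z.
have [h hub] := choice ub.
by exists h => [i|j Mj i]; [exact: (hub i).1 | exact: (hub i).2].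
Qed.

Lemma refines_strict g : summands g -> exists2 h, summands h & refines g h /\ ~ refines h g.
Proof.
move=> Pg; have Sx := summands_sum Pg; set x := sigma g in Sx *.
have [B NB nBx] := N_avoids Sx; have [al [c [Sc eB]]] := nest_ballE NB; subst B.
have dx := dist_to_nestE NB Sc nBx Sx.
have cx_neq0 : c - x != 0.
  apply/eqP => cx0; have := ball_notin_lt Sx nBx.
  by rewrite cx0 (val0 vA) ltNge (le_infty vA).
have [f [Pf [vf_min lt_cx]]] := Ai_pd (sum_subgroupsB Sc Sx) cx_neq0.
pose h i := g i + f i.
have Ph : summands h by move=> i; exact: (subgroupD (Ai_sub i) (Pg i) (Pf i)).
have vf : v (sigma f) = v (c - x) := val_eq_of_ltB vA lt_cx.
exists h => //; split => [i|hg].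
  by rewrite /h opprD addrA subrr sub0r (valN vA) dx -vf vf_min bigmin_le.
have : dist_to_nest (sigma h) <= dist_to_nest x.
  rewrite dx -vf vf_min; apply: le_bigmin => [|i _]; first exact: (le_infty vA _).
  by have := hg i; rewrite /h addrC addKr.
rewrite leNgt => /negP; apply.
apply: (dist_to_nest_lt NB Sc nBx Sx (summands_sum Ph)).
by rewrite big_split opprD addrA.
Qed.

Lemma avoiding_nest_absurd : False.
Proof.
pose T := {g | summands g}.
pose R (s t : T) := `[< refines (sval s) (sval t) >].
have t0 : T by exists (fun=> 0) => i; exact: (Ai_sub i).1.
have [||C Cchain|t tmax] := @ZL_preorder T t0 R.
- by move=> s; apply/asboolP/refines_refl.
- move=> r s t /asboolP rs /asboolP st; apply/asboolP.
  exact: refines_trans (svalP r) (svalP s) rs st.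
- have [j _|j k Cj Ck|h Ph hub] := refines_chain_ub (M := C) (gs := sval).
  + exact: svalP.
  + by case: (Cchain j k Cj Ck) => /asboolP; [left|right].
  + by exists (exist _ h Ph) => s Cs; apply/asboolP/hub.
- have [h Ph [th nht]] := refines_strict (svalP t).
  by apply: nht; apply/asboolP; apply: (tmax (exist _ h Ph)); exact: asboolT.
Qed.

End AvoidingNest.

Lemma sum_subgroups_spherically_complete : spherically_complete v S.
Proof.
move=> N N_nest; apply: contrapT => no_point.
apply: (avoiding_nest_absurd N_nest) => x Sx.
by apply/existsPNP => allB; apply: no_point; exists x.
Qed.

End SumOfSubgroups.

Theorem mainTheorem8 (d : Order.disp_t) (G : orderType d) (infty : G)
  (A : zmodType) (v : A -> G) (n : nat) (Ai : 'I_n -> A -> Prop) :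
  valued_group infty v ->
  (forall i, subgroup (Ai i)) ->
  (forall i, spherically_complete v (Ai i)) ->
  pseudo_direct infty v Ai ->
  spherically_complete v (sum_subgroups Ai).
Proof. exact: sum_subgroups_spherically_complete. Qed.
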